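(* For all integers $m\geq 3$ and $n\geq 2$, the graph $C[m]\times P[n+1]$ is antimagic.
   Context: All graphs are finite, undirected and simple. $C[m]$ denotes the cycle on $m$ vertices and $P[k]$ the path on $k$ vertices. The Cartesian product $G_1\times G_2$ of graphs $G_1=(V_1,E_1)$ and $G_2=(V_2,E_2)$ has vertex set $V_1\times V_2$, with $(u_1,u_2)$ adjacent to $(v_1,v_2)$ iff either $u_1=v_1$ and $u_2v_2\in E_2$, or $u_2=v_2$ and $u_1v_1\in E_1$. An antimagic labeling of a graph with $m'$ edges is a bijection $f$ from its edge set to $\{1,\ldots,m'\}$ such that the vertex sums $f^+(v)=\sum_{e\ni v} f(e)$ (sum over edges incident with $v$) are pairwise distinct over all vertices $v$. A graph is antimagic if it admits an antimagic labeling. *)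

From mathcomp Require Import all_boot all_order.
Unset Printing Implicit Defensive.

Record sgraph := SGraph {
  vtx : finType;
  adj : rel vtx;
  adj_sym : symmetric adj;
  adj_irr : irreflexive adj }.

Definition edges (G : sgraph) : {set {set vtx G}} :=
  [set [set u; v] | u in vtx G, v in [pred v | adj G u v]].

Definition antimagic_labeling (G : sgraph) (f : {set vtx G} -> nat) : Prop :=
  {in edges G &, injective f} /\
  (forall e, e \in edges G -> 1 <= f e <= #|edges G|) /\
  injective (fun v : vtx G => \sum_(e in edges G | v \in e) f e).

Definition antimagic (G : sgraph) : Prop := exists f, antimagic_labeling G f.

Definition cprod_adj (G1 G2 : sgraph) : rel (vtx G1 * vtx G2) :=
  fun x y => ((x.1 == y.1) && adj G2 x.2 y.2) || ((x.2 == y.2) && adj G1 x.1 y.1).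

Lemma cprod_sym G1 G2 : symmetric (cprod_adj G1 G2).
Proof.
move=> [a b] [c d]; rewrite /cprod_adj /= [c == a]eq_sym [d == b]eq_sym.
by rewrite (adj_sym G2 b d) (adj_sym G1 a c).
Qed.

Lemma cprod_irr G1 G2 : irreflexive (cprod_adj G1 G2).
Proof. by move=> [a b]; rewrite /cprod_adj /= (adj_irr G1) (adj_irr G2) !andbF. Qed.

Definition cprod (G1 G2 : sgraph) : sgraph :=
  @SGraph _ (cprod_adj G1 G2) (cprod_sym G1 G2) (cprod_irr G1 G2).

(* Cycle C[m] on vertices 0..m-1 (i ~ i+1 mod m), meaningful for m >= 3. *)
Definition cycle_adj (m : nat) : rel 'I_m :=
  fun i j => (i != j) && ((j == (i.+1 %% m) :> nat) || (i == (j.+1 %% m) :> nat)).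

Lemma cycle_sym m : symmetric (cycle_adj m).
Proof. by move=> i j; rewrite /cycle_adj eq_sym orbC. Qed.

Lemma cycle_irr m : irreflexive (cycle_adj m).
Proof. by move=> i; rewrite /cycle_adj eqxx. Qed.

Definition cycleG (m : nat) : sgraph := @SGraph _ (cycle_adj m) (cycle_sym m) (cycle_irr m).

Definition path_adj (k : nat) : rel 'I_k :=
  fun i j => (j == i.+1 :> nat) || (i == j.+1 :> nat).

Lemma path_sym k : symmetric (path_adj k).
Proof. by move=> i j; rewrite /path_adj orbC. Qed.

Lemma path_irr k : irreflexive (path_adj k).
Proof.
by move=> [i hi]; rewrite /path_adj /= orbb; apply/negbTE; rewrite neq_ltn ltnSn.
Qed.

Definition pathG (k : nat) : sgraph := @SGraph _ (path_adj k) (path_sym k) (path_irr k).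

(* Label the cycle edges of layer j < n of C[m] x P[n+1] with the block
   [j*m+1, j*m+m] of m consecutive integers, those of the top layer n with the
   last block, and the vertical edges between layers j and j+1 with block n+j.
   Inside every block, edges are ranked along the zigzag 0, m-1, 1, m-2, ... of
   the cycle: the vertical edges at vertex i get rank p(i) = min(2i, 2m-2i-1)
   and the cycle edge {i, i+1} gets rank min(2i+1, 2m-2i-2). The ranks of the
   two cycle edges at i then add up to a strictly increasing function of p(i),
   so within a layer the vertex sums are ordered by p(i). Across layers, the
   block numbers of the edges at a vertex of layer j add up to some B(j) that
   grows by at least 4 per layer, while the in-block offsets contribute less
   than 4m, so vertex sums of different layers lie in the disjoint intervals
   [B(j)*m, (B(j)+4)*m). *)

From mathcomp Require Import all_boot zify.

Set Implicit Arguments.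
Unset Strict Implicit.

Lemma antimagic_of_edge_param (G : sgraph) (C : finType)
    (edge_of : C -> {set vtx G}) (lab : C -> nat) :
  injective edge_of -> edges G = [set edge_of c | c : C] ->
  injective lab -> (forall c, 0 < lab c <= #|C|) ->
  injective (fun v => \sum_(c | v \in edge_of c) lab c) ->
  antimagic G.
Proof.
move=> edge_inj edgesE lab_inj lab_range vsum_inj.
pose f e := \sum_(c | edge_of c == e) lab c.
have f_edge c : f (edge_of c) = lab c.
  by rewrite /f (big_pred1 c) // => c'; apply/eqP/eqP => [/edge_inj | ->].
have vsumE v : \sum_(e in edge_of @: C | v \in e) f e = \sum_(c | v \in edge_of c) lab c.
  rewrite big_imset_cond; last by move=> ? ? _ _ /edge_inj.
  by apply: eq_bigr => c _; rewrite f_edge.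
exists f; rewrite /antimagic_labeling edgesE; split; [|split].
- by move=> _ _ /imsetP[c _ ->] /imsetP[c' _ ->]; rewrite !f_edge => /lab_inj ->.
- by move=> _ /imsetP[c _ ->]; rewrite f_edge card_imset.
- by move=> v w; rewrite !vsumE => /vsum_inj.
Qed.

Lemma set2_eq_cases (T : finType) (a b c d : T) :
  [set a; b] = [set c; d] -> (a = c /\ b = d) \/ (a = d /\ b = c).
Proof.
move=> eq_ab_cd.
have /set2P a_cd : a \in [set c; d] by rewrite -eq_ab_cd set21.
have /set2P b_cd : b \in [set c; d] by rewrite -eq_ab_cd set22.
have /set2P c_ab : c \in [set a; b] by rewrite eq_ab_cd set21.
have /set2P d_ab : d \in [set a; b] by rewrite eq_ab_cd set22.
by case: a_cd b_cd c_ab d_ab => -> [] -> [] ? [] ?; subst; auto.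
Qed.

Lemma big_pred2 (R : Type) (idx : R) (op : Monoid.com_law idx) (I : finType)
    (a b : I) (F : I -> R) :
  a != b -> \big[op/idx]_(i | (i == a) || (i == b)) F i = op (F a) (F b).
Proof.
move=> neq_ab; rewrite (bigD1 a) ?eqxx //= (big_pred1 b) // => i /=.
by case: eqP => [->|_]; rewrite ?andbT // (negbTE neq_ab).
Qed.

Lemma sum_ord_adjacent (n b : nat) (F : nat -> nat) : b <= n ->
  \sum_(j < n | (j == b :> nat) || (j.+1 == b)) F j =
  (if b < n then F b else 0) + (if b is k.+1 then F k else 0).
Proof.
move=> le_bn; rewrite (bigID (fun j : 'I_n => j == b :> nat)) /=; congr (_ + _).
  by rewrite -(big_ord1_eq addn F b n); apply: eq_bigl => j; rewrite andb_idl // => ->.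
case: b le_bn => [|k] lt_kn.
  by rewrite big_pred0 // => j; case: (nat_of_ord j == 0).
transitivity (\sum_(j < n | j == k :> nat) F j); last by rewrite big_ord1_eq lt_kn.
by apply: eq_bigl => j; apply/idP/idP; lia.
Qed.

Lemma eq_divmod m q r q' r' :
  r < m -> r' < m -> q * m + r = q' * m + r' -> q = q' /\ r = r'.
Proof.
by move=> lt_rm lt_r'm eq_qr; have := edivn_eq q lt_rm; rewrite eq_qr edivn_eq // => -[].
Qed.

Lemma ordSE m (i : 'I_m) : ordS i = (if i.+1 == m then 0 else i.+1) :> nat.
Proof.
case: (i.+1 =P m) => [Si_m|Si_m] /=; first by rewrite Si_m modnn.
by rewrite modn_small //; have := ltn_ord i; lia.
Qed.

Lemma ord_predE m (i : 'I_m) : ord_pred i = (if i == 0 :> nat then m.-1 else i.-1) :> nat.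
Proof.
case: i => [[|i] lt_i_m] /=; first by rewrite modn_small // prednK.
by rewrite modnDr modn_small // ltnW.
Qed.

Lemma ordS_neq m (i : 'I_m) : 1 < m -> ordS i != i.
Proof.
move=> lt1m; apply/eqP => /(congr1 (@nat_of_ord m)); rewrite ordSE.
by have := ltn_ord i; case: (i.+1 =P m); lia.
Qed.

Lemma ordS2_neq m (i : 'I_m) : 2 < m -> ordS (ordS i) != i.
Proof.
move=> lt2m; apply/eqP => /(congr1 (@nat_of_ord m)); rewrite !ordSE.
by have := ltn_ord i; do 2?case: ifP => /eqP; lia.
Qed.

Definition edge_rank m i := minn (2 * i + 1) (2 * m - 2 * i - 2).
Definition vertex_rank m i := minn (2 * i) (2 * m - 2 * i - 1).
Definition rank_pair_sum m p := if p == 0 then 1 else if p == m.-1 then 2 * p - 1 else 2 * p.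

Lemma edge_rank_lt m i : i < m -> edge_rank m i < m.
Proof. rewrite /edge_rank; lia. Qed.

Lemma vertex_rank_lt m i : i < m -> vertex_rank m i < m.
Proof. rewrite /vertex_rank; lia. Qed.

Lemma edge_rank_inj m i i' : i < m -> i' < m -> edge_rank m i = edge_rank m i' -> i = i'.
Proof. rewrite /edge_rank; lia. Qed.

Lemma vertex_rank_inj m i i' : i < m -> i' < m -> vertex_rank m i = vertex_rank m i' -> i = i'.
Proof. rewrite /vertex_rank; lia. Qed.

Lemma edge_rank_pairE m (i : 'I_m) : 2 < m ->
  edge_rank m i + edge_rank m (ord_pred i) = rank_pair_sum m (vertex_rank m i).
Proof.
have := ltn_ord i; rewrite ord_predE /rank_pair_sum /edge_rank /vertex_rank.
by case: eqP => [-> |]; do 2?case: ifP => /eqP; lia.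
Qed.

Lemma rank_pair_sum_lt m p q :
  2 < m -> p < q -> q < m -> rank_pair_sum m p < rank_pair_sum m q.
Proof. by rewrite /rank_pair_sum; do 4?case: ifP => /eqP; lia. Qed.

Lemma rank_pair_sum_le m p : 1 < m -> p < m -> rank_pair_sum m p <= 2 * m - 3.
Proof. by rewrite /rank_pair_sum; do 2?case: ifP => /eqP; lia. Qed.

Definition layer_block n j := if j < n then j else 2 * n.
Definition hlabel m n i j := (layer_block n j * m + edge_rank m i).+1.
Definition vlabel m n i j := ((n + j) * m + vertex_rank m i).+1.

Definition layer_base n j :=
  2 * layer_block n j + (if j < n then n + j else 0) + (if j is k.+1 then n + k else 0).

Definition cyl_vsum m n (v : 'I_m * 'I_n.+1) : nat :=
  hlabel m n v.1 v.2 + hlabel m n (ord_pred v.1) v.2 +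
  ((if v.2 < n then vlabel m n v.1 v.2 else 0) +
   (if (v.2 : nat) is k.+1 then vlabel m n v.1 k else 0)).

Lemma layer_base_step n j j' : j < j' <= n -> layer_base n j + 4 <= layer_base n j'.
Proof. by rewrite /layer_base /layer_block; do 2?case: ifP; case: j j' => [|j] [|j']; lia. Qed.

Lemma cyl_vsum_layer_bounds m n (v : 'I_m * 'I_n.+1) : 2 < m ->
  layer_base n v.2 * m <= cyl_vsum v < (layer_base n v.2 + 4) * m.
Proof.
case: v => i j lt2m; have lt_vr := vertex_rank_lt (ltn_ord i).
have := rank_pair_sum_le (ltnW lt2m) lt_vr; rewrite -edge_rank_pairE //.
have := ltn_ord j; rewrite /cyl_vsum /hlabel /vlabel /layer_base /layer_block /=.
by case: (j < n); case: (nat_of_ord j) => [|k]; lia.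
Qed.

Lemma cyl_vsum_lt_layer m n (i i' : 'I_m) (j j' : 'I_n.+1) : 2 < m -> j < j' ->
  cyl_vsum (i, j) < cyl_vsum (i', j').
Proof.
move=> lt2m lt_jj'; have /andP[_ vsum_lt] := cyl_vsum_layer_bounds (i, j) lt2m.
have /andP[vsum_ge _] := cyl_vsum_layer_bounds (i', j') lt2m.
apply: (leq_trans vsum_lt); apply: leq_trans vsum_ge.
by rewrite leq_mul2r layer_base_step ?orbT //= lt_jj' -ltnS ltn_ord.
Qed.

Lemma cyl_vsum_lt_rank m n (i i' : 'I_m) (j : 'I_n.+1) : 2 < m ->
  vertex_rank m i < vertex_rank m i' -> cyl_vsum (i, j) < cyl_vsum (i', j).
Proof.
move=> lt2m lt_ii'; have := rank_pair_sum_lt lt2m lt_ii' (vertex_rank_lt (ltn_ord i')).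
rewrite -!edge_rank_pairE //.
rewrite /cyl_vsum /hlabel /vlabel /=.
by case: (j < n); case: (nat_of_ord j) => [|k]; lia.
Qed.

Lemma cyl_vsum_inj m n : 2 < m -> injective (@cyl_vsum m n).
Proof.
move=> lt2m [i j] [i' j'] eq_vsum.
case: (ltngtP j j') => [lt_jj' | lt_j'j | /val_inj eq_jj'].
- by have := cyl_vsum_lt_layer i i' lt2m lt_jj'; rewrite eq_vsum ltnn.
- by have := cyl_vsum_lt_layer i' i lt2m lt_j'j; rewrite eq_vsum ltnn.
move: eq_vsum; rewrite -{}eq_jj' => eq_vsum.
case: (ltngtP (vertex_rank m i) (vertex_rank m i')) => [lt_ii' | lt_i'i | eq_ii'].
- by have := cyl_vsum_lt_rank j lt2m lt_ii'; rewrite eq_vsum ltnn.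
- by have := cyl_vsum_lt_rank j lt2m lt_i'i; rewrite eq_vsum ltnn.
by rewrite (val_inj (vertex_rank_inj (ltn_ord i) (ltn_ord i') eq_ii')).
Qed.

Notation cylinder m n := (cprod (cycleG m) (pathG n.+1)).
Notation cyl_code m n := ('I_m * 'I_n.+1 + 'I_m * 'I_n)%type.

Definition cyl_edge m n (c : cyl_code m n) : {set 'I_m * 'I_n.+1} :=
  match c with
  | inl v => [set v; (ordS v.1, v.2)]
  | inr v => [set (v.1, lift ord_max v.2); (v.1, lift ord0 v.2)]
  end.

Definition cyl_label m n (c : cyl_code m n) : nat :=
  match c with
  | inl v => hlabel m n v.1 v.2
  | inr v => vlabel m n v.1 v.2
  end.

Lemma cyl_label_inj m n : injective (@cyl_label m n).
Proof.
have er_lt (i : 'I_m) := edge_rank_lt (ltn_ord i).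
have vr_lt (i : 'I_m) := vertex_rank_lt (ltn_ord i).
move=> [[i j]|[i j]] [[i' j']|[i' j']] /= [] /eq_divmod.
- case/(_ (er_lt i) (er_lt i')) => eq_block /(edge_rank_inj (ltn_ord i) (ltn_ord i')) /val_inj ->.
  congr (inl (_, _)); apply: ord_inj; move: eq_block; have := ltn_ord j; have := ltn_ord j'.
  by rewrite /layer_block; do 2?case: ifP => ?; lia.
- case/(_ (er_lt i) (vr_lt i')) => + _; have := ltn_ord j; have := ltn_ord j'.
  by rewrite /layer_block; case: ifP => ?; lia.
- case/(_ (vr_lt i) (er_lt i')) => + _; have := ltn_ord j; have := ltn_ord j'.
  by rewrite /layer_block; case: ifP => ?; lia.
- case/(_ (vr_lt i) (vr_lt i')) => /addnI/val_inj -> /(vertex_rank_inj (ltn_ord i) (ltn_ord i')).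
  by move/val_inj ->.
Qed.

Lemma cyl_label_range m n (c : cyl_code m n) : 0 < cyl_label c <= #|{: cyl_code m n}|.
Proof.
rewrite card_sum !card_prod !card_ord.
case: c => [[i j]|[i j]] /=.
- have := edge_rank_lt (ltn_ord i).
  have : layer_block n j * m <= 2 * n * m.
    by apply: leq_mul => //; have := ltn_ord j; rewrite /layer_block; case: ifP; lia.
  rewrite /hlabel; lia.
- have := vertex_rank_lt (ltn_ord i).
  have : (n + j).+1 * m <= 2 * n * m by apply: leq_mul => //; have := ltn_ord j; lia.
  rewrite /vlabel; lia.
Qed.

Lemma cyl_edge_inj m n : 2 < m -> injective (@cyl_edge m n).
Proof.
move=> lt2m [[i j]|[i j]] [[i' j']|[i' j']] /= /set2_eq_cases
  [] [] /pair_equal_spec[eq_i eq_j] /pair_equal_spec[eq_i' eq_j'].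
3-6, 8: by move: eq_j eq_j' => /(congr1 (@nat_of_ord _)) + /(congr1 (@nat_of_ord _));
  rewrite ?lift0 ?lift_max; lia.
- by rewrite eq_i eq_j.
- by move: (ordS2_neq i' lt2m); rewrite -eq_i eq_i' eqxx.
- by rewrite eq_i (lift_inj eq_j).
Qed.

Lemma cyl_edge_in_edges m n (c : cyl_code m n) : 1 < m -> cyl_edge c \in edges (cylinder m n).
Proof.
move=> lt1m; apply/imset2P; case: c => [[i j]|[i j]] /=.
- exists (i, j) (ordS i, j) => //.
  by rewrite inE /= /cprod_adj /= eqxx /cycle_adj eq_sym ordS_neq //= eqxx orbT.
- exists (i, lift ord_max j) (i, lift ord0 j) => //.
  by rewrite inE /= /cprod_adj /= eqxx /path_adj lift0 lift_max eqxx.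
Qed.

Lemma edges_cyl_edge m n e :
  e \in edges (cylinder m n) -> exists c : cyl_code m n, e = cyl_edge c.
Proof.
case/imset2P => -[i j] [i' j'] _; rewrite inE /= /cprod_adj /= => adj_ij ->.
case/orP: adj_ij => /andP[/eqP <-] => [adj_j | /andP[_ adj_i]].
- have vertical (x y : 'I_n.+1) :
      y = x.+1 :> nat -> exists c : cyl_code m n, [set (i, x); (i, y)] = cyl_edge c.
    move=> eq_y; have lt_xn : x < n by rewrite -ltnS -eq_y ltn_ord.
    exists (inr (i, Ordinal lt_xn)).
    by congr [set (i, _); (i, _)]; apply: ord_inj; rewrite ?lift0 ?lift_max.
  case/orP: adj_j => /eqP/vertical[c edge_c]; exists c; first by rewrite -edge_c.
  by rewrite -edge_c setUC.
- case/orP: adj_i => /eqP eq_i; [exists (inl (i, j)) | exists (inl (i', j)); rewrite setUC].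
  all: by congr [set _; (_, j)]; apply: ord_inj.
Qed.

Lemma edges_cylinder m n : 1 < m -> edges (cylinder m n) = [set cyl_edge c | c : cyl_code m n].
Proof.
move=> lt1m; apply/setP => e; apply/idP/imsetP => [/edges_cyl_edge[c ->] | [c _ ->]].
  by exists c.
exact: cyl_edge_in_edges.
Qed.

Lemma cyl_vsumE m n (v : 'I_m * 'I_n.+1) : 1 < m ->
  \sum_(c | v \in cyl_edge c) cyl_label c = cyl_vsum v.
Proof.
case: v => a b lt1m; rewrite big_sumType /=; congr (_ + _).
  rewrite (eq_bigl (fun x => (x == (a, b)) || (x == (ord_pred a, b)))) => [|[i j]].
    rewrite big_pred2 // xpair_eqE eqxx andbT.
    by apply: contraNneq (ordS_neq a lt1m) => {1}->; rewrite ord_predK.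
  rewrite in_set2 !xpair_eqE /= -(can2_eq (@ordSK m) (@ord_predK m)).
  by rewrite (eq_sym i) (eq_sym j) (eq_sym (ordS i)).
pose adjacent (j : 'I_n) := (j == b :> nat) || (j.+1 == b).
rewrite (eq_bigl (fun p : 'I_m * 'I_n => (p.1 == a) && adjacent p.2)) => [|[i j]].
  rewrite -(pair_big_dep (pred1 a) (fun=> adjacent) (vlabel m n)) big_pred1_eq.
  by rewrite sum_ord_adjacent // -ltnS.
rewrite in_set2 !xpair_eqE (eq_sym a) -andb_orr -!val_eqE /=.
by rewrite /bump leq0n (ltn_geF (ltn_ord j)) /= !(eq_sym (val b)).
Qed.

Theorem lemma4p1 (m n : nat) (hm : 3 <= m) (hn : 2 <= n) :
  antimagic (cprod (cycleG m) (pathG n.+1)).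
Proof.
have lt1m : 1 < m := ltnW hm.
apply: (antimagic_of_edge_param (G := cylinder m n) (@cyl_edge_inj m n hm)
          (@edges_cylinder m n lt1m) (@cyl_label_inj m n) (@cyl_label_range m n)).
by move=> v w; rewrite !cyl_vsumE // => /(cyl_vsum_inj hm).
Qed.
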